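(* Let $G$ be a group and $H$ a core-free subgroup of $G$. If $H$ has a right transversal $S$ in $G$ which generates $G$ and which is nilpotent with respect to its induced right loop structure, then $H$ is solvable.
   Context: For $H\le G$, a right transversal $S$ contains exactly one element of each right coset $Hg$, with $1\in S$; its induced operation is $x\circ y=$ the unique element of $S\cap Hxy$, making $(S,\circ)$ a right loop (two-sided identity, each equation $X\circ a=b$ uniquely solvable). $H$ is core-free if $\bigcap_{g\in G}g^{-1}Hg=\{1\}$. A congruence on a right loop $S$ is an equivalence relation which is a right subloop of $S\times S$; an invariant right subloop is the class $T$ of $1$ under a congruence, $S/T=\{T\circ x\}$ with $(T\circ x)\circ(T\circ y)=T\circ(x\circ y)$. For congruences $\beta,\gamma$, $\gamma$ centralizes $\beta$ if there is a congruence $(\gamma|\beta)$ on the right loop $\beta\subseteq S\times S$ with: (i) $(x,y)(\gamma|\beta)(u,v)\Rightarrow x\gamma u$; (ii) for $(x,y)\in\beta$, $(u,v)\mapsto u$ is a bijection from the $(\gamma|\beta)$-class of $(x,y)$ to the $\gamma$-class of $x$; (iii) $(x,y)\in\gamma\Rightarrow(x,x)(\gamma|\beta)(y,y)$; (iv) $(x,y)(\gamma|\beta)(u,v)\Rightarrow(y,x)(\gamma|\beta)(v,u)$; (v) $(x,y)(\gamma|\beta)(u,v)$, $(y,z)(\gamma|\beta)(v,w)\Rightarrow(x,z)(\gamma|\beta)(u,w)$. The center $\mathcal Z(S)$ is the class of $1$ under the unique maximal congruence centralized by $S\times S$. $S$ is nilpotent if the series $\mathcal Z_0=\{1\}$,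 $\mathcal Z_1=\mathcal Z(S)$, $\mathcal Z_{i+1}/\mathcal Z_i=\mathcal Z(S/\mathcal Z_i)$ reaches $\mathcal Z_n=S$ for some $n$. *)

From Stdlib Require Import Arith.

Set Implicit Arguments.

Record Group := {
  gcar :> Type;
  gmul : gcar -> gcar -> gcar;
  ginv : gcar -> gcar;
  gone : gcar;
  gmulA : forall x y z, gmul x (gmul y z) = gmul (gmul x y) z;
  gmul1l : forall x, gmul gone x = x;
  gmulVl : forall x, gmul (ginv x) x = gone
}.

Section GroupNotions.
Variable G : Group.
Local Notation "x * y" := (gmul G x y).
Local Notation "x ^-1" := (ginv G x) (at level 3, format "x ^-1").
Local Notation one := (gone G).

Definition is_subgroup (H : G -> Prop) : Prop :=
  H one /\ (forall x y, H x -> H y -> H (x * y)) /\ (forall x, H x -> H (x^-1)).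

Definition core_free (H : G -> Prop) : Prop :=
  forall x, (forall g, exists h, H h /\ x = g^-1 * h * g) -> x = one.

(* S is a right transversal of H: 1 \in S and S meets each right coset Hg
   in exactly one element (Hg = Hs iff g * s^-1 \in H). *)
Definition right_transversal (H S : G -> Prop) : Prop :=
  S one /\
  forall g, exists s, (S s /\ H (g * s^-1)) /\
    forall s', S s' /\ H (g * s'^-1) -> s' = s.

Inductive gen (P : G -> Prop) : G -> Prop :=
| gen_base x : P x -> gen P x
| gen_one : gen P one
| gen_mul x y : gen P x -> gen P y -> gen P (x * y)
| gen_inv x : gen P x -> gen P (x^-1).

Definition generates (S : G -> Prop) : Prop := forall g, gen S g.

Fixpoint derived (H : G -> Prop) (n : nat) : G -> Prop :=
  match n with
  | 0 => H
  | S n' => gen (fun c => exists a b, derived H n' a /\ derived H n' b /\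
                          c = a^-1 * b^-1 * a * b)
  end.

Definition solvable (H : G -> Prop) : Prop :=
  exists n, forall g, derived H n g -> g = one.

End GroupNotions.

(** For the loop induced on a transversal, [eqv] is
   Leibniz equality; the quotient of a loop by a congruence [R] is the same
   carrier and operation with [eqv := R] (elements of S/T are the classes
   T \o* x, represented by x).  Congruences of S/R are exactly congruences of S
   containing R, which is what [congruence] below expresses. *)
Record RLoop := {
  lcar : Type;
  lop : lcar -> lcar -> lcar;
  lone : lcar;
  leqv : lcar -> lcar -> Prop
}.

Definition quot (L : RLoop) (R : lcar L -> lcar L -> Prop) : RLoop :=
  {| lcar := lcar L; lop := @lop L; lone := lone L; leqv := R |}.

Section LoopNotions.
Variable L : RLoop.
Let A := lcar L.
Local Notation "x \o* y" := (lop L x y) (at level 40, left associativity).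
Local Notation eqv := (@leqv L).

(* A congruence: an equivalence relation (compatible with the loop's
   equality) which is a right subloop of L x L: contains (1,1) (by
   reflexivity), closed under the operation, and closed under right
   division (solutions of X \o* a = b). *)
Definition congruence (R : A -> A -> Prop) : Prop :=
  (forall x, R x x) /\
  (forall x y, R x y -> R y x) /\
  (forall x y z, R x y -> R y z -> R x z) /\
  (forall x y, eqv x y -> R x y) /\
  (forall x y u v, R x y -> R u v -> R (x \o* u) (y \o* v)) /\
  (forall x y a b, R a b -> R (x \o* a) (y \o* b) -> R x y).

Definition pop (p q : A * A) : A * A := (fst p \o* fst q, snd p \o* snd q).

(* A congruence on the right loop beta (a right subloop of L x L, with
   componentwise operation and equality) *)
Definition congruence_on (beta : A -> A -> Prop)
    (D : A * A -> A * A -> Prop) : Prop :=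
  let P := fun p : A * A => beta (fst p) (snd p) in
  (forall p q, D p q -> P p /\ P q) /\
  (forall p, P p -> D p p) /\
  (forall p q, D p q -> D q p) /\
  (forall p q r, D p q -> D q r -> D p r) /\
  (forall p q, P p -> P q -> eqv (fst p) (fst q) -> eqv (snd p) (snd q) -> D p q) /\
  (forall p q p' q', D p q -> D p' q' -> D (pop p p') (pop q q')) /\
  (forall p q a b, P p -> P q -> D a b -> D (pop p a) (pop q b) -> D p q).

Definition centralizes (gamma beta : A -> A -> Prop) : Prop :=
  exists D : A * A -> A * A -> Prop,
    congruence_on beta D /\
    (forall x y u v, D (x, y) (u, v) -> gamma x u) /\
    (* (ii): (u,v) |-> u is a bijection from the D-class of (x,y) onto the
       gamma-class of x (modulo the loop's equality) *)
    (forall x y, beta x y ->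
       (forall u, gamma x u -> exists v, D (x, y) (u, v)) /\
       (forall u v u' v', D (x, y) (u, v) -> D (x, y) (u', v') ->
                          eqv u u' -> eqv v v')) /\
    (forall x y, gamma x y -> D (x, x) (y, y)) /\
    (forall x y u v, D (x, y) (u, v) -> D (y, x) (v, u)) /\
    (forall x y z u v w, D (x, y) (u, v) -> D (y, z) (v, w) -> D (x, z) (u, w)).

Definition total_rel (x y : A) : Prop := True.

(* zeta is the unique maximal congruence centralized by L x L; the center
   Z(L) is its class of 1 *)
Definition is_center_cong (zeta : A -> A -> Prop) : Prop :=
  congruence zeta /\ centralizes total_rel zeta /\
  forall beta, congruence beta -> centralizes total_rel beta ->
    forall x y, beta x y -> zeta x y.

End LoopNotions.

(* Upper central series Z_0 = {1}, Z_{i+1}/Z_i = Z(L/Z_i), expressed through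
   the corresponding congruences z i; L is nilpotent iff Z_n = L for some n *)
Definition nilpotent_loop (L : RLoop) : Prop :=
  exists (n : nat) (z : nat -> lcar L -> lcar L -> Prop),
    (forall x y, z 0 x y <-> leqv L x y) /\
    (forall i, i < n -> is_center_cong (quot L (z i)) (z (S i))) /\
    (forall x, z n (lone L) x).

(* The right loop induced on a right transversal S of H in G, given the
   induced operation circ (x \o* y is the element of S in H x y). *)
Definition induced_op_spec (G : Group) (H S : G -> Prop)
    (circ : {x : G | S x} -> {x : G | S x} -> {x : G | S x}) : Prop :=
  forall x y : {x : G | S x},
    H (gmul G (proj1_sig (circ x y))
              (ginv G (gmul G (proj1_sig x) (proj1_sig y)))).

Definition transversal_loop (G : Group) (S : G -> Prop)
    (circ : {x : G | S x} -> {x : G | S x} -> {x : G | S x})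
    (S1 : S (gone G)) : RLoop :=
  {| lcar := {x : G | S x}; lop := circ; lone := exist _ (gone G) S1;
     leqv := @eq _ |}.

(** We prove more than
   solvability of [H]: every term of the derived series eventually acts
   trivially on [S], so [G] itself is solvable.

   [G] acts on the right cosets of [H], identified with [S], by
   [x . g = the representative of H x g]; the loop operation is
   [x o y = x . y], and the action is faithful because [H] is core-free.
   The heart of the argument (section [ActionLoop]) is a commutator step:
   if [Z] is the centre congruence of [S/R] and [a], [b] move every point
   within its [Z]-class, then [a^-1 b^-1 a b] moves every point within its
   [R]-class.  The congruence [D] witnessing that [Z] is central is invariant
   under the diagonal action of [G] (as [S] generates [G]), so both
   [x . ab] and [x . ba] are [R]-congruent to the same "shifted" point.
   Descending the upper central series [Z_n = S, ..., Z_0 = 1], the [k]-th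
   derived subgroup acts within [Z_(n-k)]-classes, hence the [n]-th acts
   trivially and is trivial by faithfulness. *)

From Stdlib Require Import ProofIrrelevance ClassicalEpsilon Relations Arith Lia.

Section GroupFacts.
Variable G : Group.
Local Notation "x * y" := (gmul G x y).
Local Notation "x ^-1" := (ginv G x) (at level 3, format "x ^-1").
Local Notation one := (gone G).

Lemma gmulV (x : G) : x * x^-1 = one.
Proof.
  rewrite <- (gmul1l G (x * x^-1)), <- (gmulVl G x^-1) at 1.
  rewrite <- gmulA, (gmulA G x^-1), gmulVl, gmul1l. apply gmulVl.
Qed.

Lemma gmul1r (x : G) : x * one = x.
Proof. rewrite <- (gmulVl G x), gmulA, gmulV. apply gmul1l. Qed.

Lemma ginvM (x y : G) : (x * y)^-1 = y^-1 * x^-1.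
Proof.
  rewrite <- (gmul1r (x * y)^-1), <- (gmulV x) at 1.
  rewrite <- (gmul1l G x^-1) at 1. rewrite <- (gmulV y).
  rewrite !gmulA, <- (gmulA G _ x y), gmulVl, gmul1l. reflexivity.
Qed.

Lemma ginvK (x : G) : x^-1^-1 = x.
Proof. rewrite <- (gmul1r x^-1^-1), <- (gmulVl G x), gmulA, gmulVl. apply gmul1l. Qed.

End GroupFacts.

Section RightCosetAction.
Variables (G : Group) (H S : G -> Prop).
Hypothesis HsubG : is_subgroup G H.
Hypothesis Htr : right_transversal G H S.
Local Notation "x * y" := (gmul G x y).
Local Notation "x ^-1" := (ginv G x) (at level 3, format "x ^-1").
Local Notation one := (gone G).
Local Notation T := {x : G | S x}.

Definition same_coset (a b : G) : Prop := H (a * b^-1).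

Lemma same_coset_refl (a : G) : same_coset a a.
Proof. unfold same_coset. rewrite gmulV. apply HsubG. Qed.

Lemma same_coset_sym (a b : G) : same_coset a b -> same_coset b a.
Proof.
  unfold same_coset. intros h. apply (proj2 (proj2 HsubG)) in h.
  rewrite ginvM, ginvK in h. exact h.
Qed.

Lemma same_coset_trans (a b c : G) :
  same_coset a b -> same_coset b c -> same_coset a c.
Proof.
  unfold same_coset. intros h1 h2. pose proof (proj1 (proj2 HsubG) _ _ h1 h2) as h.
  rewrite <- gmulA, (gmulA G b^-1), gmulVl, gmul1l in h. exact h.
Qed.

Lemma same_coset_mulr (a b g : G) : same_coset a b -> same_coset (a * g) (b * g).
Proof.
  unfold same_coset. rewrite ginvM, <- gmulA, (gmulA G g), gmulV, gmul1l. auto.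
Qed.

Definition coset_rep (g : G) : T :=
  let (s, hs) := constructive_indefinite_description _ (proj2 Htr g) in
  exist S s (proj1 (proj1 hs)).

Lemma coset_rep_spec (g : G) : same_coset g (proj1_sig (coset_rep g)).
Proof.
  unfold coset_rep. destruct (constructive_indefinite_description _ _) as [s hs].
  exact (proj2 (proj1 hs)).
Qed.

Lemma coset_rep_unique (g : G) (s : T) : same_coset g (proj1_sig s) -> coset_rep g = s.
Proof.
  intros h. unfold coset_rep.
  destruct (constructive_indefinite_description _ _) as [t ht].
  destruct s as [s hs]. apply subset_eq_compat. symmetry. apply (proj2 ht). auto.
Qed.

Definition coset_act (x : T) (g : G) : T := coset_rep (proj1_sig x * g).

Lemma coset_act1 (x : T) : coset_act x one = x.
Proof. apply coset_rep_unique. rewrite gmul1r. apply same_coset_refl. Qed.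

Lemma coset_actM (x : T) (g h : G) :
  coset_act x (g * h) = coset_act (coset_act x g) h.
Proof.
  apply coset_rep_unique. unfold coset_act.
  apply (same_coset_trans _ (proj1_sig (coset_rep (proj1_sig x * g)) * h)).
  - rewrite gmulA. apply same_coset_mulr, coset_rep_spec.
  - apply coset_rep_spec.
Qed.

Lemma coset_act_inv (S1 : S one) (x : T) :
  coset_act x (proj1_sig x)^-1 = exist S one S1.
Proof. apply coset_rep_unique. cbn. rewrite gmulV. apply same_coset_refl. Qed.

Lemma coset_act_one (S1 : S one) (y : T) : coset_act (exist S one S1) (proj1_sig y) = y.
Proof. apply coset_rep_unique. cbn. rewrite gmul1l. apply same_coset_refl. Qed.

Lemma induced_op_coset_act
    (circ : T -> T -> T) (Hcirc : induced_op_spec G H S circ) (x y : T) :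
  circ x y = coset_act x (proj1_sig y).
Proof. symmetry. apply coset_rep_unique. apply same_coset_sym, Hcirc. Qed.

(* An element fixing every coset lies in every conjugate of [H], so the
   action is faithful when [H] is core-free. *)
Lemma core_free_coset_act_faithful (Hcf : core_free G H) (g : G) :
  (forall x, coset_act x g = x) -> g = one.
Proof.
  intros hg. apply Hcf. intros a. exists (a * g * a^-1). split.
  - apply (same_coset_trans _ (proj1_sig (coset_rep a) * g)).
    + apply same_coset_mulr, coset_rep_spec.
    + apply (same_coset_trans _ (proj1_sig (coset_rep a))).
      * pose proof (coset_rep_spec (proj1_sig (coset_rep a) * g)) as h.
        change (coset_rep (proj1_sig (coset_rep a) * g)) with (coset_act (coset_rep a) g) in h.
        rewrite hg in h. exact h.
      * apply same_coset_sym, coset_rep_spec.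
  - rewrite !gmulA, gmulVl, gmul1l, <- gmulA, gmulVl, gmul1r. reflexivity.
Qed.

End RightCosetAction.

Section ActionLoop.
Variables (G : Group) (S : G -> Prop) (S1 : S (gone G)).
Local Notation "x * y" := (gmul G x y).
Local Notation "x ^-1" := (ginv G x) (at level 3, format "x ^-1").
Local Notation one := (gone G).
Local Notation T := {x : G | S x}.
Local Notation val := (@proj1_sig G S).
Local Notation e := (exist S one S1).

Variables (circ : T -> T -> T) (act : T -> G -> T).
Local Notation L := (transversal_loop G S circ S1).

Hypothesis act1 : forall x, act x one = x.
Hypothesis actM : forall x g h, act x (g * h) = act (act x g) h.
Hypothesis circ_act : forall x y, circ x y = act x (val y).
Hypothesis act_inv : forall x, act x (val x)^-1 = e.
Hypothesis act_one : forall y, act e (val y) = y.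
Hypothesis Hgen : generates G S.

Lemma circ_e (x : T) : circ x e = x.
Proof. rewrite circ_act. apply act1. Qed.

Definition rdiv (x y : T) : T := act x (val y)^-1.

Lemma rdivK (x y : T) : circ (rdiv x y) y = x.
Proof. unfold rdiv. rewrite circ_act, <- actM, gmulVl. apply act1. Qed.

Lemma congruence_rdiv (R C : T -> T -> Prop) (HC : congruence (quot L R) C)
    (x1 x2 y1 y2 : T) : C x1 x2 -> C y1 y2 -> C (rdiv x1 y1) (rdiv x2 y2).
Proof.
  destruct HC as (_ & _ & _ & _ & _ & Cdiv). intros hx hy.
  apply (Cdiv _ _ y1 y2); [exact hy|]. cbn. rewrite !rdivK. exact hx.
Qed.

(* [shift x y z = (x / y) o z] transports [z] along the displacement from
   [y] to [x]; it is the ternary operation the centrality witness respects. *)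
Definition shift (x y z : T) : T := circ (rdiv x y) z.

Lemma shift_id (x y : T) : shift x y y = x.
Proof. apply rdivK. Qed.

Lemma shift_self (x z : T) : shift x x z = z.
Proof. unfold shift, rdiv. rewrite act_inv, circ_act. apply act_one. Qed.

Definition pshift (A B C : T * T) : T * T :=
  (shift (fst A) (fst B) (fst C), shift (snd A) (snd B) (snd C)).

Definition pact (Q : T * T) (g : G) : T * T := (act (fst Q) g, act (snd Q) g).

Definition acts_within (C : T -> T -> Prop) (g : G) : Prop := forall x, C x (act x g).

(* Here [Z] is a congruence of [S/R] centralised by the total relation, with
   witness [D]; [D_func] is the uniqueness half of condition (ii), and
   [D_diag] is condition (iii) for the total relation. *)
Section CentralStep.
Variables (R Z : T -> T -> Prop) (D : T * T -> T * T -> Prop).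
Hypothesis R_sym : forall x y, R x y -> R y x.
Hypothesis R_trans : forall x y z, R x y -> R y z -> R x z.
Hypothesis HZ : congruence (quot L R) Z.
Hypothesis HD : congruence_on (quot L R) Z D.
Hypothesis D_func : forall x y u v v',
  Z x y -> D (x, y) (u, v) -> D (x, y) (u, v') -> R v v'.
Hypothesis D_diag : forall x y, D (x, x) (y, y).

Lemma D_pshift (A A' B B' C C' : T * T) :
  D A A' -> D B B' -> D C C' -> D (pshift A B C) (pshift A' B' C').
Proof.
  destruct HD as (D_sub & _ & _ & _ & _ & D_op & D_div). intros hA hB hC.
  assert (hdiv : D (rdiv (fst A) (fst B), rdiv (snd A) (snd B))
                   (rdiv (fst A') (fst B'), rdiv (snd A') (snd B'))).
  { destruct (D_sub _ _ hA) as [PA PA']. destruct (D_sub _ _ hB) as [PB PB'].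
    apply (D_div _ _ B B'); cbn; try exact hB.
    - exact (congruence_rdiv R Z HZ _ _ _ _ PA PB).
    - exact (congruence_rdiv R Z HZ _ _ _ _ PA' PB').
    - unfold pop; cbn. rewrite !rdivK. destruct A, A'; exact hA. }
  exact (D_op _ _ _ _ hdiv hC).
Qed.

Lemma D_shift_left (x y u : T) : Z x y -> D (x, y) (u, shift y x u).
Proof.
  destruct HZ as (Z_refl & _). destruct HD as (_ & D_refl & _). intros hxy.
  pose proof (D_pshift (x, y) (x, y) (x, x) (x, x) (x, x) (u, u)
                (D_refl (x, y) hxy) (D_refl (x, x) (Z_refl x)) (D_diag x u)) as h.
  unfold pshift in h; cbn in h. rewrite shift_self, shift_id, shift_self in h. exact h.
Qed.

Lemma D_shift_right (x w y : T) : Z x w -> D (x, w) (y, shift y x w).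
Proof.
  destruct HZ as (Z_refl & _). destruct HD as (_ & D_refl & _). intros hxw.
  pose proof (D_pshift (x, x) (y, y) (x, x) (x, x) (x, w) (x, w)
                (D_diag x y) (D_refl (x, x) (Z_refl x)) (D_refl (x, w) hxw)) as h.
  unfold pshift in h; cbn in h. rewrite shift_self, shift_self, shift_id in h. exact h.
Qed.

(* [D] is invariant under the diagonal action of [G]: for generators this is
   compatibility with the loop operation, and it propagates through [gen]. *)
Lemma D_pact (g : G) : gen G S g -> forall P Q, D P Q <-> D P (pact Q g).
Proof.
  destruct HZ as (Z_refl & _ & _ & _ & _ & Z_div).
  destruct HD as (D_sub & _ & _ & _ & _ & D_op & D_div).
  induction 1 as [g hs| |g h _ IHg _ IHh|g _ IHg]; intros P Q.
  - set (s := exist S g hs).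
    assert (hq : forall Q, pact Q g = pop (quot L R) Q (s, s)).
    { intros [q1 q2]. unfold pact, pop; cbn. rewrite !circ_act. reflexivity. }
    assert (hp : P = pop (quot L R) P (e, e)).
    { destruct P as [p1 p2]. unfold pop; cbn. rewrite !circ_e. reflexivity. }
    rewrite hq. split; intros hPQ.
    + rewrite hp. exact (D_op _ _ _ _ hPQ (D_diag e s)).
    + destruct (D_sub _ _ hPQ) as [hP hQ].
      apply (D_div P Q (e, e) (s, s)); [exact hP| |apply D_diag|rewrite <- hp; exact hPQ].
      apply (Z_div _ _ s s); [apply Z_refl|exact hQ].
  - unfold pact. rewrite !act1. destruct Q. reflexivity.
  - unfold pact in *. rewrite !actM. rewrite (IHg P Q). apply IHh.
  - unfold pact in *. rewrite (IHg P (act (fst Q) g^-1, act (snd Q) g^-1)). cbn.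
    rewrite <- !actM, gmulVl, !act1. destruct Q. reflexivity.
Qed.

(* If [a] and [b] move [x] within its [Z]-class, then [x . ab] and [x . ba]
   are both [R]-congruent to [shift (x . b) x (x . a)]. *)
Lemma commute_modulo (a b : G) (x : T) :
  Z x (act x a) -> Z x (act x b) -> R (act x (a * b)) (act x (b * a)).
Proof.
  destruct HD as (_ & D_refl & _). intros hxu hxy.
  set (u := act x a) in *. set (y := act x b) in *.
  assert (h_ba : D (x, y) (u, act x (b * a))).
  { rewrite actM. apply (proj1 (D_pact a (Hgen a) (x, y) (x, y))), D_refl, hxy. }
  assert (h_ab : D (x, u) (y, act x (a * b))).
  { rewrite actM. apply (proj1 (D_pact b (Hgen b) (x, u) (x, u))), D_refl, hxu. }
  assert (to_shift_ba : R (act x (b * a)) (shift y x u))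
    by exact (D_func x y u _ _ hxy h_ba (D_shift_left x y u hxy)).
  assert (to_shift_ab : R (act x (a * b)) (shift y x u))
    by exact (D_func x u y _ _ hxu h_ab (D_shift_right x u y hxu)).
  exact (R_trans _ _ _ to_shift_ab (R_sym _ _ to_shift_ba)).
Qed.

End CentralStep.

Lemma commutator_acts_within (R Z : T -> T -> Prop) (R_equiv : equivalence T R)
    (HZ : is_center_cong (quot L R) Z) (a b : G) :
  acts_within Z a -> acts_within Z b -> acts_within R (a^-1 * b^-1 * a * b).
Proof.
  destruct R_equiv as [R_refl R_trans R_sym].
  destruct HZ as [HZc [[D [HD [_ [D_ii [D_iii _]]]]] _]].
  assert (D_func : forall x y u v v',
             Z x y -> D (x, y) (u, v) -> D (x, y) (u, v') -> R v v').
  { intros x y u v v' hxy h h'. exact (proj2 (D_ii x y hxy) u v u v' h h' (R_refl u)). }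
  intros Ha Hb x.
  set (x' := act x (a^-1 * b^-1)).
  pose proof (commute_modulo R Z D R_sym R_trans HZc HD D_func (fun p q => D_iii p q I)
                a b x' (Ha x') (Hb x')) as h.
  unfold x' in h. rewrite <- !actM in h.
  replace (a^-1 * b^-1 * (b * a)) with one in h.
  2:{ rewrite <- !gmulA, (gmulA G b^-1 b), gmulVl, gmul1l, gmulVl. reflexivity. }
  rewrite act1, !gmulA in h. apply R_sym. exact h.
Qed.

Lemma acts_within_gen (C : T -> T -> Prop) (HC : equivalence T C) (P : G -> Prop) :
  (forall g, P g -> acts_within C g) -> forall g, gen G P g -> acts_within C g.
Proof.
  destruct HC as [C_refl C_trans C_sym]. intros HP g hg.
  induction hg as [g hg| |g h _ IHg _ IHh|g _ IHg]; intros x.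
  - exact (HP g hg x).
  - rewrite act1. apply C_refl.
  - rewrite actM. exact (C_trans _ _ _ (IHg x) (IHh _)).
  - apply C_sym. pose proof (IHg (act x g^-1)) as h.
    rewrite <- actM, gmulVl, act1 in h. exact h.
Qed.

Section UpperCentralSeries.
Variables (n : nat) (z : nat -> T -> T -> Prop).
Hypothesis z_bottom : forall x y, z 0 x y <-> x = y.
Hypothesis z_step : forall i, i < n -> is_center_cong (quot L (z i)) (z (1 + i)).
Hypothesis z_top : forall x, z n e x.

Lemma series_equivalence (i : nat) : i <= n -> equivalence T (z i).
Proof.
  destruct i as [|j]; intros hj.
  - split; intros x; [|intros y w|intros y]; rewrite !z_bottom; congruence.
  - destruct (z_step j ltac:(lia)) as [(z_refl & z_sym & z_trans & _) _].
    split; [exact z_refl|exact z_trans|exact z_sym].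
Qed.

Lemma derived_acts_within (K : G -> Prop) (k : nat) :
  k <= n -> forall g, derived G K k g -> acts_within (z (n - k)) g.
Proof.
  induction k as [|k IHk]; intros hk g hg.
  - rewrite Nat.sub_0_r. destruct (series_equivalence n (le_n n)) as [_ z_trans z_sym].
    intros x. exact (z_trans _ e _ (z_sym _ _ (z_top x)) (z_top _)).
  - refine (acts_within_gen _ (series_equivalence (n - (1 + k)) ltac:(lia)) _ _ g hg).
    intros c [a [b [ha [hb ->]]]].
    replace (n - k) with (1 + (n - (1 + k))) in IHk by lia.
    apply (commutator_acts_within (z (n - (1 + k))) (z (1 + (n - (1 + k)))));
      [apply series_equivalence; lia|apply z_step; lia|apply IHk; [lia|assumption]..].
Qed.

End UpperCentralSeries.

Lemma nilpotent_derived_acts_trivially :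
  nilpotent_loop L -> exists n, forall K g, derived G K n g -> forall x, act x g = x.
Proof.
  intros [n [z [z_bottom [z_step z_top]]]]. exists n. intros K g hg x.
  symmetry. apply z_bottom. rewrite <- (Nat.sub_diag n).
  exact (derived_acts_within n z z_bottom z_step z_top K n (le_n n) g hg x).
Qed.

End ActionLoop.

Theorem mainTheorem16 (G : Group) (H S : G -> Prop)
  (HsubG : is_subgroup G H) (Hcf : core_free G H)
  (Htr : right_transversal G H S) (S1 : S (gone G)) (Hgen : generates G S)
  (circ : {x : G | S x} -> {x : G | S x} -> {x : G | S x})
  (Hcirc : induced_op_spec G H S circ)
  (Hnil : nilpotent_loop (transversal_loop G S circ S1)) :
  solvable G H.
Proof.
  destruct (nilpotent_derived_acts_trivially G S S1 circ (coset_act G H S Htr)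
              (coset_act1 G H S HsubG Htr) (coset_actM G H S HsubG Htr)
              (induced_op_coset_act G H S HsubG Htr circ Hcirc)
              (coset_act_inv G H S HsubG Htr S1) (coset_act_one G H S HsubG Htr S1)
              Hgen Hnil) as [n acts_trivially].
  exists n. intros g hg.
  exact (core_free_coset_act_faithful G H S HsubG Htr Hcf g (acts_trivially H g hg)).
Qed.
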